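(* Let $G$ be a Polish group and $\Gamma$ a countable abelian group, and identify $\Gamma$ with the subgroup $\Gamma\times\{0\}$ of $\Gamma\times\mathbb{Z}$. Assume that for a dense set of $\pi \in \mathrm{Hom}(\Gamma \times \mathbb{Z}, G)$ one has $\overline{\pi(\Gamma \times \mathbb{Z})} = \overline{\pi(\Gamma)}$. Then the restriction map $\mathrm{Res} \colon \mathrm{Hom}(\Gamma \times \mathbb{Z}, G) \to \mathrm{Hom}(\Gamma, G)$ is category-preserving.
   Context: $\mathrm{Hom}(\Lambda,G)$ is the space of homomorphisms $\Lambda\to G$ with the topology from $G^\Lambda$. A continuous map $f\colon X\to Y$ between Polish spaces is category-preserving if $f^{-1}(A)$ is comeager in $X$ whenever $A$ is comeager in $Y$. *)

From HB Require Import structures.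
From mathcomp Require Import all_boot all_order all_algebra.
From mathcomp Require Import monoid.
From mathcomp Require Import all_classical all_reals topology normedtype.
From mathcomp Require Import Rstruct Rstruct_topology.

Set Implicit Arguments.
Unset Strict Implicit.
Unset Printing Implicit Defensive.

Import Order.TTheory GRing.Theory Num.Theory.
Local Open Scope classical_set_scope.
Local Open Scope ring_scope.

#[short(type="topGroupType")]
HB.structure Definition TopGroup := {G of Group G & Topological G}.

Definition topological_group (G : topGroupType) : Prop :=
  continuous (fun p : G * G => (p.1 * p.2)%g) /\
  continuous (fun x : G => (x^-1)%g).

Definition separable_space (T : topologicalType) : Prop :=
  exists D : set T, countable D /\ dense D.

Definition is_metric (T : Type) (d : T -> T -> Rdefinitions.R) : Prop :=
  [/\ (forall x y, 0 <= d x y),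
      (forall x y, d x y = 0 <-> x = y),
      (forall x y, d x y = d y x) &
      (forall x y z, d x z <= d x y + d y z)].

Definition completely_metrizable (T : topologicalType) : Prop :=
  exists d : T -> T -> Rdefinitions.R,
    [/\ is_metric d,
        (forall A : set T, open A <->
            (forall x, A x -> exists e, 0 < e /\ [set y | d x y < e] `<=` A)) &
        (forall u : nat -> T,
            (forall e, 0 < e -> exists N : nat, forall m n : nat,
                 (N <= m)%N -> (N <= n)%N -> d (u m) (u n) < e) ->
            exists l : T, u @ \oo --> l)].

Definition polish_space (T : topologicalType) : Prop :=
  separable_space T /\ completely_metrizable T.

Definition polish_group (G : topGroupType) : Prop :=
  topological_group G /\ polish_space G.

Definition nowhere_dense (T : topologicalType) (A : set T) : Prop :=
  interior (closure A) = set0.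

Definition meager (T : topologicalType) (A : set T) : Prop :=
  exists F : nat -> set T,
    (forall n, nowhere_dense (F n)) /\ A `<=` \bigcup_n F n.

Definition comeager (T : topologicalType) (A : set T) : Prop :=
  meager (~` A).

Definition category_preserving (X Y : topologicalType) (f : X -> Y) : Prop :=
  forall A : set Y, comeager A -> comeager (f @^-1` A).

(* Hom(L, G) as a subset of G^L with the product (pointwise) topology;
   as a space we use the subspace (sigma-type) topology [set_type]. *)
Definition hom_set (L : zmodType) (G : topGroupType) : set {ptws L -> G} :=
  [set f : L -> G | forall x y : L, f (x + y) = (f x * f y)%g].
Arguments hom_set : clear implicits.

Notation HomSp L G := (set_type (hom_set L G)).

Lemma res_hom_proof (Gam : zmodType) (G : topGroupType)
  (f : set_type (hom_set (Gam * int)%type G)) :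
  hom_set Gam G (fun g : Gam => (val f) (g, 0%R)).
Proof.
move=> x y /=; have := set_valP f => /(_ (x, 0%R) (y, 0%R)) /= <-.
congr (sval f _); apply: pair_equal_spec; split => //.
Qed.

Definition Res (Gam : zmodType) (G : topGroupType)
  (f : HomSp (Gam * int)%type G) : HomSp Gam G :=
  exist _ (fun g : Gam => (val f) (g, 0%R)) (mem_set (res_hom_proof f)) : HomSp Gam G.

From HB Require Import structures.
From mathcomp Require Import all_boot all_order all_algebra.
From mathcomp Require Import monoid.
From mathcomp Require Import all_classical all_reals topology normedtype.
Local Open Scope classical_set_scope.
Local Open Scope ring_scope.
Import GRing.Theory.

(* A continuous map that is open at each point of a dense set pulls nowhere
   dense sets back to nowhere dense sets, hence is category-preserving.
   Homomorphisms of Gam x Z are the pairs (p, g) of a homomorphism p of Gam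
   and an element g of G (the image of (0, 1)) commuting with p, glued into
   (x, n) |-> p x * g ^ n, continuously in (g, p).  If pi is such a map with
   pi (0, 1) in the closure of the range of p = Res pi, pick d with p d close
   to pi (0, 1); for rho close to p, the homomorphism (x, n) |-> rho (x + n d)
   restricts to rho and is close to pi.  So Res is open at every such pi, and
   these are dense by hypothesis. *)

Section OpenAtDensePoints.
Context {X Y : topologicalType}.

Definition open_at (f : X -> Y) (x : X) : Prop :=
  forall U, nbhs x U -> nbhs (f x) (f @` U).

Lemma closure_preimage_subset (f : X -> Y) (A : set Y) :
  continuous f -> closure (f @^-1` A) `<=` f @^-1` closure A.
Proof.
move=> f_cont x clx B /f_cont nBx.
by have [y [Ay By]] := clx _ nBx; exists (f y).
Qed.

Variables (f : X -> Y) (S : set X).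
Hypotheses (f_cont : continuous f) (S_dense : dense S).
Hypothesis S_open_at : S `<=` open_at f.

Lemma nowhere_dense_preimage (A : set Y) :
  nowhere_dense A -> nowhere_dense (f @^-1` A).
Proof.
rewrite /nowhere_dense -!subset0 => A_nd x intx.
set U := interior (closure (f @^-1` A)).
have [p [Up Sp]] := S_dense U (ex_intro _ x intx) (@open_interior _ _).
apply: (A_nd (f p)).
have : nbhs (f p) (f @` U) by apply: S_open_at _ Sp _ (nbhs_interior Up).
apply: filterS => _ [q /interior_subset clq <-].
exact: closure_preimage_subset clq.
Qed.

Lemma meager_preimage (A : set Y) : meager A -> meager (f @^-1` A).
Proof.
move=> [F [F_nd AF]]; exists (fun n => f @^-1` F n); split.
  by move=> n; apply: nowhere_dense_preimage.
by move=> x /AF.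
Qed.

Lemma category_preserving_open_at : category_preserving f.
Proof.
by move=> A A_co; rewrite /comeager preimage_setC; apply: meager_preimage.
Qed.

End OpenAtDensePoints.

Lemma ptws_cvg {I : eqType} {K : topologicalType} (F : set_system (I -> K))
    {FF : Filter F} (f : {ptws I -> K}) :
  (forall i, (fun g => g i) @ F --> f i) -> F --> f.
Proof.
move=> Fi; apply/cvg_sup => i U [V] [[W] oW <-] WfN WU.
by apply: filterS WU _; apply: Fi; exact: open_nbhs_nbhs.
Qed.

Section IntegerPowers.
Variable G : groupType.

Definition expgz (g : G) (n : int) : G :=
  match n with Posz k => (g ^+ k)%g | Negz k => ((g ^+ k.+1)^-1)%g end.

Variables (L : zmodType) (phi : L -> G).
Hypothesis phiD : {morph phi : x y / x + y >-> (x * y)%g}.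

Lemma morph0g : phi 0 = 1%g.
Proof. by apply: (@mulIg _ (phi 0)); rewrite mul1g -phiD addr0. Qed.

Lemma morphNg x : phi (- x) = ((phi x)^-1)%g.
Proof. by apply/esym/mulg1_eq; rewrite -phiD subrr morph0g. Qed.

Lemma morphMng x k : phi (x *+ k) = (phi x ^+ k)%g.
Proof.
elim: k => [|k IHk]; first by rewrite mulr0n morph0g.
by rewrite mulrS phiD IHk expgS.
Qed.

Lemma morphMzg x n : phi (x *~ n) = expgz (phi x) n.
Proof.
case: n => k /=; first by rewrite -morphMng.
by rewrite NegzE mulrNz morphNg -pmulrn morphMng.
Qed.

End IntegerPowers.
Arguments expgz {G}.
Arguments morphMzg {G L phi}.

Section TopologicalGroup.
Variable G : topGroupType.
Hypothesis mul_cont : continuous (fun p : G * G => (p.1 * p.2)%g).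
Hypothesis inv_cont : continuous (fun x : G => (x^-1)%g).

Lemma cvgMg {T} (F : set_system T) {FF : Filter F} (f g : T -> G) a b :
  f @ F --> a -> g @ F --> b -> (fun x => f x * g x)%g @ F --> (a * b)%g.
Proof.
exact: (@continuous2_cvg _ _ _ _ F FF f g (fun u v : G => (u * v)%g) a b
  (mul_cont (a, b))).
Qed.

Lemma expg_continuous k : continuous (fun g : G => (g ^+ k)%g).
Proof.
elim: k => [|k IHk] x; first exact: cvg_cst.
under eq_fun do rewrite expgS.
exact: cvgMg cvg_id (IHk x).
Qed.

Lemma expgz_continuous n : continuous (fun g : G => expgz g n).
Proof.
case: n => k x /=; first exact: expg_continuous.
exact: (continuous_comp (expg_continuous k.+1 x) (inv_cont _)).
Qed.

Variable Gam : zmodType.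

Definition hom_extension (gp : G * {ptws Gam -> G}) :
    {ptws (Gam * int)%type -> G} :=
  fun x => (gp.2 x.1 * expgz gp.1 x.2)%g.

Lemma hom_extension_continuous : continuous hom_extension.
Proof.
move=> gp; apply: (@ptws_cvg _ _ (hom_extension @ nbhs gp)) => -[x n] /=.
apply: cvgMg.
  apply: (@continuous_comp _ _ _ snd (fun p : {ptws Gam -> G} => p x)).
    exact: cvg_snd.
  exact: proj_continuous.
apply: (@continuous_comp _ _ _ fst (fun g : G => expgz g n)).
  exact: cvg_fst.
exact: expgz_continuous.
Qed.

Lemma hom_extensionE (pi : HomSp (Gam * int)%type G) :
  val pi = hom_extension (val pi (0, 1), fun x => val pi (x, 0)).
Proof.
have piD := set_valP pi.
apply: funext => -[x n]; rewrite /hom_extension /=.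
have -> : expgz (val pi (0, 1)) n = val pi (0, n).
  rewrite -(morphMzg (phi := fun m => val pi (0, m))) ?intz // => a b.
  rewrite -piD; congr (val pi _).
  by apply/pair_equal_spec; rewrite /= addr0.
rewrite -piD; congr (val pi _).
by apply/pair_equal_spec; rewrite /= addr0 add0r.
Qed.

Lemma extend_hom_subproof (rho : HomSp Gam G) (d : Gam) :
  hom_set (Gam * int)%type G (fun x => val rho (x.1 + d *~ x.2)).
Proof. by move=> x y; rewrite -(set_valP rho) /= mulrzDr addrACA. Qed.

Definition extend_hom (rho : HomSp Gam G) (d : Gam) :
    HomSp (Gam * int)%type G :=
  exist _ (fun x => val rho (x.1 + d *~ x.2)) (mem_set (extend_hom_subproof _ _)).

Lemma Res_extend_hom rho d : Res (extend_hom rho d) = rho.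
Proof. by apply: val_inj; apply: funext => x /=; rewrite mulr0z addr0. Qed.

Lemma val_extend_hom rho d :
  val (extend_hom rho d) = hom_extension (val rho d, val rho).
Proof.
apply: funext => -[x n]; rewrite /hom_extension /= (set_valP rho).
by rewrite (morphMzg (set_valP rho)).
Qed.

Lemma Res_continuous : continuous (@Res Gam G).
Proof.
apply: continuous_comp_initial => f.
apply: (@ptws_cvg _ _ ((set_val \o @Res Gam G) @ nbhs f)) => x.
apply: (@continuous_comp _ _ _ set_val
  (fun h : {ptws (Gam * int)%type -> G} => h (x, 0))).
  exact: initial_continuous.
exact: proj_continuous.
Qed.

Lemma Res_open_at (pi : HomSp (Gam * int)%type G) :
  closure (range (val pi)) = closure (range (fun g : Gam => val pi (g, 0))) ->
  open_at (@Res Gam G) pi.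
Proof.
move=> cl_range U; rewrite nbhsE => -[_ [[W oW <-] Wpi] WU].
set g := val pi (0, 1); set p : {ptws Gam -> G} := fun x => val pi (x, 0).
have : nbhs (g, p) (hom_extension @^-1` W).
  apply: hom_extension_continuous; rewrite -hom_extensionE.
  exact: open_nbhs_nbhs.
case=> -[A B] /= [+ nB] AB_W; rewrite nbhsE => -[A' [oA' A'g] A'A].
have /(_ A' (open_nbhs_nbhs (conj oA' A'g))) [_ [[d _ <-] A'pd]] :
    closure (range p) g.
  by rewrite /p -cl_range; apply: subset_closure; exists (0, 1).
set V := B `&` (fun f : {ptws Gam -> G} => f d) @^-1` A'.
have nV : nbhs p V.
  apply: filterI nB _; apply: (@proj_continuous _ (fun=> G) d p).
  exact: open_nbhs_nbhs.
have : nbhs (Res pi) (set_val @^-1` V) by exact: initial_continuous.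
apply: filterS => rho [Brho A'rho].
exists (extend_hom rho d); last exact: Res_extend_hom.
apply: WU; change (W (val (extend_hom rho d))); rewrite val_extend_hom.
by apply: AB_W; split => //; apply: A'A.
Qed.

End TopologicalGroup.

Theorem lemma8p7 (G : topGroupType) (Gam : countZmodType) :
  polish_group G ->
  dense [set pi : HomSp (Gam * int)%type G |
           closure (range (val pi)) =
           closure (range (fun g : Gam => (val pi) (g, 0%R)))] ->
  category_preserving (@Res Gam G).
Proof.
move=> [[mul_cont inv_cont] _] dense_cl.
apply: category_preserving_open_at dense_cl _; first exact: Res_continuous.
by move=> pi; apply: Res_open_at.
Qed.
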